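(* Let $\mathcal{C}\subseteq\mathbb{F}^n$ be an $\mathbb{F}$-linear code, and let $\rho_{\mathcal{C}}$, $\rho_{\mathcal{C}^\perp}$ be the rank functions of the sum-matroids associated to $\mathcal{C}$ and $\mathcal{C}^\perp$ respectively. Then for every $\mathcal{L}\in\mathcal{P}(\mathbf{K}^{\mathbf{n}})$, $\rho_{\mathcal{C}}(\mathcal{L}^\perp)+\mathrm{Rk}(\mathcal{L})-\rho_{\mathcal{C}}(\mathbf{K}^{\mathbf{n}})=\rho_{\mathcal{C}^\perp}(\mathcal{L})$; that is, the rank function $\rho_{\mathcal{C}}^*$ of the dual sum-matroid of $M_{\mathcal{C}}$ equals $\rho_{\mathcal{C}^\perp}$.
   Context: Setting: $\ell,n_1,\dots,n_\ell$ positive integers, $K_1,\dots,K_\ell$ finite fields with a common finite extension $\mathbb{F}$, $n=\sum n_i$. $\mathcal{P}(\mathbf{K}^{\mathbf{n}})=\mathcal{P}(K_1^{n_1})\times\cdots\times\mathcal{P}(K_\ell^{n_\ell})$, $\mathcal{P}(K_i^{n_i})$ the lattice of $K_i$-subspaces of $K_i^{n_i}$; orthogonal complements $\mathcal{L}^\perp=(\mathcal{L}_1^\perp,\dots,\mathcal{L}_\ell^\perp)$ componentwise w.r.t. the standard bilinear forms; $\mathrm{Rk}(\mathcal{L})=\sum_i\dim_{K_i}\mathcal{L}_i$; $\mathbf{K}^{\mathbf{n}}=(K_1^{n_1},\dots,K_\ell^{n_\ell})$. $\mathcal{C}^\perp$ is the dual of $\mathcal{C}$ in $\mathbb{F}^n$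 (so $(\mathcal{C}^\perp)^\perp=\mathcal{C}$). For an $\mathbb{F}$-linear code $\mathcal{D}\subseteq\mathbb{F}^n$ and $\mathcal{L}=(\mathcal{L}_1,\dots,\mathcal{L}_\ell)$ with $N_i=\dim_{K_i}\mathcal{L}_i$, $N=\sum N_i$, let $\mathbf{A}_i$ be an $N_i\times n_i$ generator matrix of $\mathcal{L}_i$ over $K_i$, $\mathbf{A}=\mathrm{diag}(\mathbf{A}_1,\dots,\mathbf{A}_\ell)$, $\Pi_{\mathcal{L}}(\mathbf{x})=\mathbf{x}\mathbf{A}^T\in\mathbb{F}^N$, and $\rho_{\mathcal{D}}(\mathcal{L})=\dim_{\mathbb{F}}\Pi_{\mathcal{L}}(\mathcal{D}^\perp)$; $M_{\mathcal{D}}=(\mathbf{K}^{\mathbf{n}},\rho_{\mathcal{D}})$ is the associated sum-matroid. The dual of a sum-matroid with rank function $\rho$ has rank function $\rho^*(\mathcal{L})=\rho(\mathcal{L}^\perp)+\mathrm{Rk}(\mathcal{L})-\rho(\mathbf{K}^{\mathbf{n}})$. *)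

From HB Require Import structures.
From mathcomp Require Import all_boot all_order all_algebra all_field.
Set Implicit Arguments. Unset Strict Implicit. Unset Printing Implicit Defensive.
Import GRing.Theory.
Local Open Scope ring_scope.

(* An element of
   P(K_i^{n_i}) is represented by a square matrix over K i whose row space is
   the subspace.  A code D <= F^n (n = \sum_i n i) is the row space of a
   matrix D : 'M[F]_(k, \sum_i n i). *)

Section SumMatroid.
Variables (l : nat) (K : 'I_l -> finFieldType) (F : finFieldType)
  (sig : forall i, {rmorphism K i -> F}) (n : 'I_l -> nat).

Definition lattice_elt := forall i : 'I_l, 'M[K i]_(n i).

(* componentwise orthogonal complement w.r.t. the standard bilinear form:
   rows v with v *m (L i)^T = 0, i.e. v . u = 0 for every u in L i *)
Definition lortho (L : lattice_elt) : lattice_elt := fun i => kermx (L i)^T.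

Definition Rk (L : lattice_elt) : nat := \sum_(i < l) \rank (L i).

Definition ltop : lattice_elt := fun i => 1%:M.

Definition dual_code k (D : 'M[F]_(k, \sum_(i < l) n i)) : 'M[F]_(\sum_(i < l) n i) :=
  kermx D^T.

(* the block-diagonal matrix A = diag(A_1,...,A_l) where A_i = row_base (L i)
   is an (N_i x n_i) generator matrix of L_i over K_i, mapped into F *)
Definition genA (L : lattice_elt) :
  'M[F]_(\sum_(i < l) \rank (L i), \sum_(i < l) n i) :=
  mxblock (fun (i j : 'I_l) =>
    match @eqP _ i j return 'M[F]_(\rank (L i), n j) with
    | ReflectT e => castmx (erefl, congr1 n e) (map_mx (sig i) (row_base (L i)))
    | ReflectF _ => 0
    end).

(* rho_D(L) = dim_F Pi_L(D^perp), Pi_L(x) = x A^T *)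
Definition rho k (D : 'M[F]_(k, \sum_(i < l) n i)) (L : lattice_elt) : nat :=
  \rank (dual_code D *m (genA L)^T).

Definition dual_rank (r : lattice_elt -> nat) (L : lattice_elt) : int :=
  (r (lortho L))%:Z + (Rk L)%:Z - (r ltop)%:Z.

End SumMatroid.

From HB Require Import structures.
From mathcomp Require Import all_boot all_order all_algebra all_field.
Set Implicit Arguments. Unset Strict Implicit. Unset Printing Implicit Defensive.
Import GRing.Theory.
Local Open Scope ring_scope.

(* Write [V] for the row space of the block-diagonal generator matrix of [L]
   and [P = C^perp].  For any matrices [A] and [B], [rank (A *m B^T)] equals
   both [rank A - dim (A :&: B^perp)] and, transposing, [rank B - dim (B :&:
   A^perp)].  The generator matrix of [L^perp] spans exactly [V^perp] and the
   one of the top element is invertible, so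
     rho_C(L^perp) = dim P - dim (P :&: V),   rho_C(K^n) = dim P,
     rho_{C^perp}(L) = dim V - dim (V :&: (P^perp)^perp) = Rk L - dim (V :&: P),
   and the two sides of the identity agree. *)

Section BlockDiagonal.
Variables (l : nat) (p_ q_ : 'I_l -> nat).

Definition bdiag_block (T : nmodType) (D : forall i, 'M[T]_(p_ i, q_ i))
    (i j : 'I_l) : 'M[T]_(p_ i, q_ j) :=
  match @eqP _ i j return 'M[T]_(p_ i, q_ j) with
  | ReflectT e => castmx (erefl, congr1 q_ e) (D i)
  | ReflectF _ => 0
  end.

(* Eta-expanded so that the [mxblock] lemmas of the library, stated for
   [\mxblock_(i, j) B_ i j], match without unfolding [bdiag_block]. *)
Definition bdiag_mx (T : nmodType) (D : forall i, 'M[T]_(p_ i, q_ i)) :=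
  \mxblock_(i, j) bdiag_block D i j.

Lemma bdiag_block_id (T : nmodType) (D : forall i, 'M[T]_(p_ i, q_ i)) i :
  bdiag_block D i i = D i.
Proof.
rewrite /bdiag_block; case: eqP => // e.
by rewrite (eq_irrelevance e erefl) castmx_id.
Qed.

Lemma bdiag_block_neq (T : nmodType) (D : forall i, 'M[T]_(p_ i, q_ i)) i j :
  i != j -> bdiag_block D i j = 0.
Proof. by rewrite /bdiag_block; case: eqP. Qed.

Lemma mxblock_bdiag (T : nmodType) (D : forall i, 'M[T]_(p_ i, q_ i))
    (B : forall i j, 'M[T]_(p_ i, q_ j)) :
    (forall i, B i i = D i) -> (forall i j, i != j -> B i j = 0) ->
  mxblock B = bdiag_mx D.
Proof.
move=> BD B0; apply: eq_mxblock => i j.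
rewrite -[RHS]/(bdiag_block D i j).
have [<-|neq_ij] := eqVneq i j; first by rewrite bdiag_block_id.
by rewrite bdiag_block_neq ?B0.
Qed.

Lemma eq_bdiag_mx (T : nmodType) (D D' : forall i, 'M[T]_(p_ i, q_ i)) :
  (forall i, D i = D' i) -> bdiag_mx D = bdiag_mx D'.
Proof.
move=> eqD; apply: mxblock_bdiag => [i|i j neq_ij].
  by rewrite bdiag_block_id.
exact: bdiag_block_neq.
Qed.

Lemma bdiag_mx0 (T : nmodType) :
  bdiag_mx (fun i => (0 : 'M[T]_(p_ i, q_ i))) = 0.
Proof. by rewrite -mxblock0; symmetry; apply: mxblock_bdiag. Qed.

End BlockDiagonal.

Lemma tr_bdiag_mx (T : nmodType) (l : nat) (p_ q_ : 'I_l -> nat)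
    (D : forall i, 'M[T]_(p_ i, q_ i)) :
  (bdiag_mx D)^T = bdiag_mx (fun i => (D i)^T).
Proof.
rewrite tr_mxblock; apply: mxblock_bdiag => [i|i j neq_ij].
  by rewrite bdiag_block_id.
by rewrite bdiag_block_neq ?trmx0 // eq_sym.
Qed.

Lemma mul_bdiag_mx (R : pzRingType) (l : nat) (p_ q_ r_ : 'I_l -> nat)
    (D : forall i, 'M[R]_(p_ i, q_ i)) (E : forall i, 'M[R]_(q_ i, r_ i)) :
  bdiag_mx D *m bdiag_mx E = bdiag_mx (fun i => D i *m E i).
Proof.
rewrite /bdiag_mx mul_mxblock; apply: mxblock_bdiag => [i|i k neq_ik].
  rewrite (bigD1 i) //= big1 ?addr0 ?bdiag_block_id // => j neq_ji.
  by rewrite bdiag_block_neq ?mul0mx // eq_sym.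
rewrite big1 // => j _.
have [<-|neq_ij] := eqVneq i j; first by rewrite (bdiag_block_neq E neq_ik) mulmx0.
by rewrite (bdiag_block_neq D neq_ij) mul0mx.
Qed.

Lemma bdiag_mx1 (R : pzRingType) (l : nat) (p_ : 'I_l -> nat) :
  bdiag_mx (fun i => (1%:M : 'M[R]_(p_ i))) = 1%:M.
Proof.
rewrite -(mxdiagZ 1); symmetry; apply: mxblock_bdiag => [i|i j /negbTE->] //.
by rewrite eqxx conform_mx_id.
Qed.

Lemma rank_bdiag_mx_free (F : fieldType) (l : nat) (p_ q_ : 'I_l -> nat)
    (D : forall i, 'M[F]_(p_ i, q_ i)) :
  (forall i, row_free (D i)) -> \rank (bdiag_mx D) = (\sum_i p_ i)%N.
Proof.
move=> freeD; apply/eqP; rewrite eqn_leq rank_leq_row /=.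
have inv_exists i : exists E : 'M[F]_(q_ i, p_ i), D i *m E == 1%:M.
  by have /row_freeP[E DE] := freeD i; exists E; apply/eqP.
pose E i := xchoose (inv_exists i).
have DE i : D i *m E i = 1%:M := eqP (xchooseP (inv_exists i)).
have := mxrankM_maxl (bdiag_mx D) (bdiag_mx E).
by rewrite mul_bdiag_mx (eq_bdiag_mx DE) bdiag_mx1 mxrank1.
Qed.

Section Orthogonal.
Variable F : fieldType.

Lemma kermx_trK m N (A : 'M[F]_(m, N)) : (A == kermx (kermx A^T)^T)%MS.
Proof.
have sub_AK : (A <= kermx (kermx A^T)^T)%MS.
  by apply/sub_kermxP; rewrite -{1}[A]trmxK -trmx_mul mulmx_ker trmx0.
have [_ <-] := mxrank_leqif_eq sub_AK.
by rewrite mxrank_ker mxrank_tr mxrank_ker mxrank_tr subKn ?rank_leq_col.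
Qed.

Lemma eqmx_kermx_tr_orth m1 m2 N (A : 'M[F]_(m1, N)) (B : 'M[F]_(m2, N)) :
  B *m A^T = 0 -> (\rank A + \rank B)%N = N -> (B == kermx A^T)%MS.
Proof.
move=> BA0 rankAB; have sub_BK : (B <= kermx A^T)%MS by apply/sub_kermxP.
have [_ <-] := mxrank_leqif_eq sub_BK.
by rewrite mxrank_ker mxrank_tr -(eqn_add2l (\rank A)) subnKC ?rank_leq_col ?rankAB.
Qed.

Lemma mxrank_mul_tr_ker m1 m2 N (A : 'M[F]_(m1, N)) (B : 'M[F]_(m2, N)) :
  (\rank (A *m B^T) + \rank (B :&: kermx A^T) = \rank B)%N.
Proof. by rewrite -mxrank_tr trmx_mul trmxK mxrank_mul_ker. Qed.

End Orthogonal.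

Section GeneratorMatrix.
Variables (l : nat) (K : 'I_l -> finFieldType) (F : finFieldType)
  (sig : forall i, {rmorphism K i -> F}) (n : 'I_l -> nat).

Lemma genAE (L : lattice_elt K n) :
  genA sig L = bdiag_mx (fun i => map_mx (sig i) (row_base (L i))).
Proof. by []. Qed.

Lemma rank_genA (L : lattice_elt K n) : \rank (genA sig L) = Rk L.
Proof.
rewrite genAE rank_bdiag_mx_free // => i.
by rewrite row_free_map row_base_free.
Qed.

Lemma Rk_lortho (L : lattice_elt K n) : (Rk L + Rk (lortho L) = \sum_i n i)%N.
Proof.
rewrite /Rk -big_split /=; apply: eq_bigr => i _.
by rewrite mxrank_ker mxrank_tr subnKC ?rank_leq_row.
Qed.

Lemma Rk_ltop : Rk (ltop K n) = (\sum_i n i)%N.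
Proof. by apply: eq_bigr => i _; rewrite mxrank1. Qed.

Lemma mul_genA_lortho (L : lattice_elt K n) :
  genA sig L *m (genA sig (lortho L))^T = 0.
Proof.
rewrite !genAE tr_bdiag_mx mul_bdiag_mx.
rewrite (eq_bdiag_mx (D' := fun i => 0)) ?bdiag_mx0 // => i.
rewrite map_trmx -map_mxM.
have /submxP[X ->] : (row_base (L i) <= L i)%MS by rewrite eq_row_base.
have orth_i : L i *m (row_base (lortho L i))^T = 0.
  apply: trmx_inj; rewrite trmx_mul trmxK trmx0.
  by apply/sub_kermxP; rewrite eq_row_base.
by rewrite -mulmxA orth_i mulmx0 map_mx0.
Qed.

Lemma genA_lortho_perp (L : lattice_elt K n) :
  (genA sig L == kermx (genA sig (lortho L))^T)%MS.
Proof.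
apply: eqmx_kermx_tr_orth; first exact: mul_genA_lortho.
by rewrite !rank_genA addnC Rk_lortho.
Qed.

Section Rho.
Variables (k : nat) (C : 'M[F]_(k, \sum_(i < l) n i)).

Lemma rho_lortho (L : lattice_elt K n) :
  (rho sig C (lortho L) + \rank (dual_code C :&: genA sig L)
    = \rank (dual_code C))%N.
Proof.
rewrite -[RHS](mxrank_mul_ker _ (genA sig (lortho L))^T).
by rewrite (cap_eqmx (eqmx_refl _) (eqmxP (genA_lortho_perp L))).
Qed.

Lemma rho_ltop : rho sig C (ltop K n) = \rank (dual_code C).
Proof.
apply: mxrankMfree.
by rewrite /row_free mxrank_tr rank_genA Rk_ltop.
Qed.

Lemma rho_dual_code (L : lattice_elt K n) :
  (rho sig (dual_code C) L + \rank (genA sig L :&: dual_code C) = Rk L)%N.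
Proof.
rewrite -rank_genA -[RHS](mxrank_mul_tr_ker (dual_code (dual_code C))).
by rewrite (cap_eqmx (eqmx_refl _) (eqmxP (kermx_trK (dual_code C)))).
Qed.

End Rho.

End GeneratorMatrix.

Theorem mainTheorem6 (l : nat) (K : 'I_l -> finFieldType) (F : finFieldType)
  (sig : forall i, {rmorphism K i -> F}) (n : 'I_l -> nat)
  (k : nat) (C : 'M[F]_(k, \sum_(i < l) n i)) (L : lattice_elt K n) :
  dual_rank (rho sig C) L = (rho sig (dual_code C) L)%:Z.
Proof.
have rhoL := rho_lortho sig C L.
have := rho_dual_code sig C L; rewrite capmxC => rhoLdual.
rewrite /dual_rank rho_ltop.
apply/eqP; rewrite subr_eq -!PoszD; apply/eqP; congr Posz.
by rewrite -rhoL -rhoLdual addnCA.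
Qed.
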